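(* Given a derivation in Horn Linear Logic $\mathbf{HLL}$ of a Horn sequent $W,\Delta,!\Gamma\vdash Z$, one can construct a tree-like Horn program $P$ which is a strong solution to this sequent.
   Context: Positive literals are propositional variables; a simple product is a tensor product of one or more positive literals, $\otimes$ and $\oplus$ being commutative and associative, so simple products correspond to nonempty finite multisets of literals; $X\cong Y$ means they represent the same multiset. Horn implication: $X\multimap Y$; $\oplus$-Horn implication: $X\multimap(Y_1\oplus Y_2)$ ($X,Y,Y_i$ simple products). A Horn sequent is $W,\Delta,!\Gamma\vdash Z$ with $W,Z$ simple products and $\Delta,\Gamma$ finite multisets of Horn and $\oplus$-Horn implications. $\mathbf{HLL}$ has the rules: I: $X\vdash X$; L$\otimes$: from $X,\Gamma,!\Delta\vdash Z$ infer $Y,\Gamma,!\Delta\vdash Z$ if $X\cong Y$; H: $X,X\multimap Y\vdash Y$; M: from $X,\Gamma,!\Delta\vdash Y$ infer $(X\otimes V),\Gamma,!\Delta\vdash(Y\otimes V)$; $\oplus$-H: from $(Y_1\otimes V),\Gamma,!\Delta\vdash Z$ and $(Y_2\otimes V),\Gamma,!\Delta\vdash Z$ infer $(X\otimes V),\Gamma,X\multimap(Y_1\oplus Y_2),!\Delta\vdash Z$; L!: from $X,\Gamma,A,!\Delta\vdash Z$ infer $X,\Gamma,!A,!\Delta\vdash Z$; W!: from $X,\Gamma,!\Delta\vdash Z$ infer $X,\Gamma,!A,!\Delta\vdash Z$; C!: from $X,\Gamma,!A,!A,!\Delta\vdash Z$ infer $X,\Gamma,!A,!\Delta\vdash Z$;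 Cut: from $W,\Gamma_1,!\Delta_1\vdash U$ and $U,\Gamma_2,!\Delta_2\vdash Z$ infer $W,\Gamma_1,\Gamma_2,!\Delta_1,!\Delta_2\vdash Z$ ($A$ a Horn or $\oplus$-Horn implication). A tree-like Horn program is a finite rooted tree in which each vertex has at most two children, each edge is labelled by a Horn implication, the root is the input vertex, and each vertex with exactly two outgoing edges (a divergent vertex) has them labelled by Horn implications with the same antecedent, $X\multimap Y_1$ and $X\multimap Y_2$. For a simple product $W$, values $\mathrm{OUT}(P,W,v)$ are defined: $\mathrm{OUT}(P,W,\text{root})=W$; for an edge $(v,w)$ labelled $X\multimap Y$, if $\mathrm{OUT}(P,W,v)$ is defined and $\mathrm{OUT}(P,W,v)\cong X\otimes V$ for some (possibly empty) product $V$ of literals, then $\mathrm{OUT}(P,W,w)=Y\otimes V$; otherwise it is undefined. The formula used on an edge $e$ out of a non-divergent vertex is its label; on each of the two edges out of a divergent vertex labelled $X\multimap Y_1$, $X\multimap Y_2$ it is $X\multimap(Y_1\oplus Y_2)$. $P$ is a strong solution to $W,\Delta,!\Gamma\vdash Z$ if: for every terminal vertex $w$, $\mathrm{OUT}(P,W,w)$ is defined and $\cong Z$; the formula used on every edge belongs to $\Gamma$ or to $\Delta$; and on every path from the root to a terminal vertex, each formula of $\Delta$ (counted with multiplicity) is used exactly once. *)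

From HB Require Import structures.
From mathcomp Require Import all_boot.
From mathcomp Require Import finmap multiset.

Set Implicit Arguments.
Unset Strict Implicit.
Unset Printing Implicit Defensive.

Local Open Scope mset_scope.

Definition lit := nat.

(* Products of literals, identified up to commutativity/associativity of
   the tensor: finite multisets of literals.  A *simple* product is a
   nonempty one; tensor is multiset sum, the empty multiset is the empty
   product (only used for the "possibly empty" context V). *)
Definition lprod := {mset lit}.
Definition simple (X : lprod) : bool := X != mset0.

(* Horn implications X -o Y and (+)-Horn implications X -o (Y1 (+) Y2). *)
Inductive formula :=
| Horn of lprod & lprod
| OHorn of lprod & lprod & lprod.

Definition formula_enc (f : formula) : lprod * lprod * option lprod :=
  match f with
  | Horn X Y => (X, Y, None)
  | OHorn X Y1 Y2 => (X, Y1, Some Y2)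
  end.
Definition formula_dec (t : lprod * lprod * option lprod) : formula :=
  match t with
  | (X, Y, None) => Horn X Y
  | (X, Y1, Some Y2) => OHorn X Y1 Y2
  end.
Lemma formula_encK : cancel formula_enc formula_dec.
Proof. by case. Qed.
HB.instance Definition _ := Equality.copy formula (can_type formula_encK).

Definition wf_formula (A : formula) : bool :=
  match A with
  | Horn X Y => simple X && simple Y
  | OHorn X Y1 Y2 => [&& simple X, simple Y1 & simple Y2]
  end.

(* Derivability in HLL of the sequent  W, G, !D |- Z
   (G : linear context, D : the banged context, both multisets, represented
   as sequences up to permutation via the rule [hll_exch]). *)
Inductive hll : lprod -> seq formula -> seq formula -> lprod -> Prop :=
| hll_I X : simple X -> hll X [::] [::] X
| hll_H X Y : simple X -> simple Y -> hll X [:: Horn X Y] [::] Y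
| hll_M X G D Y V : hll X G D Y -> hll (X `+` V) G D (Y `+` V)
| hll_OH X Y1 Y2 V G D Z :
    simple X -> simple Y1 -> simple Y2 ->
    hll (Y1 `+` V) G D Z -> hll (Y2 `+` V) G D Z ->
    hll (X `+` V) (OHorn X Y1 Y2 :: G) D Z
| hll_Lbang X A G D Z : hll X (A :: G) D Z -> hll X G (A :: D) Z
| hll_Wbang X A G D Z : wf_formula A -> hll X G D Z -> hll X G (A :: D) Z
| hll_Cbang X A G D Z : hll X G (A :: A :: D) Z -> hll X G (A :: D) Z
| hll_Cut W G1 D1 U G2 D2 Z :
    hll W G1 D1 U -> hll U G2 D2 Z -> hll W (G1 ++ G2) (D1 ++ D2) Z
| hll_exch W G D Z G' D' :
    hll W G D Z -> perm_eq G G' -> perm_eq D D' -> hll W G' D' Z.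

(* Tree-like Horn programs.  [PNode1 X Y P]: a vertex with one outgoing edge
   labelled X -o Y leading to subtree P.  [PNode2 X Y1 Y2 P1 P2]: a divergent
   vertex whose two outgoing edges are labelled X -o Y1 and X -o Y2. *)
Inductive program :=
| PLeaf
| PNode1 of lprod & lprod & program
| PNode2 of lprod & lprod & lprod & program & program.

Fixpoint program_wf (P : program) : bool :=
  match P with
  | PLeaf => true
  | PNode1 X Y P1 => [&& simple X, simple Y & program_wf P1]
  | PNode2 X Y1 Y2 P1 P2 =>
      [&& simple X, simple Y1, simple Y2, program_wf P1 & program_wf P2]
  end.

(* [outs_ok P W Z]: starting from OUT(root) = W, OUT(P,W,w) is defined and
   equal to Z for every terminal vertex w. *)
Fixpoint outs_ok (P : program) (W Z : lprod) : Prop :=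
  match P with
  | PLeaf => W = Z
  | PNode1 X Y P1 => exists V, W = X `+` V /\ outs_ok P1 (Y `+` V) Z
  | PNode2 X Y1 Y2 P1 P2 =>
      exists V, W = X `+` V /\ outs_ok P1 (Y1 `+` V) Z /\ outs_ok P2 (Y2 `+` V) Z
  end.

Fixpoint used_paths (P : program) : seq (seq formula) :=
  match P with
  | PLeaf => [:: [::]]
  | PNode1 X Y P1 => map (cons (Horn X Y)) (used_paths P1)
  | PNode2 X Y1 Y2 P1 P2 =>
      map (cons (OHorn X Y1 Y2)) (used_paths P1 ++ used_paths P2)
  end.

Definition strong_solution (P : program) (W : lprod) (Dl Gb : seq formula)
    (Z : lprod) : Prop :=
  outs_ok P W Z /\
  (forall s, s \in used_paths P ->
     (forall A, A \in s -> (A \in Gb) || (A \in Dl)) /\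
     (* the formulas of Dl, with multiplicity, are each used exactly once on
        the path; any further uses are uses of formulas of Gb *)
     (forall A, count_mem A Dl <= count_mem A s /\
                (count_mem A Dl < count_mem A s -> A \in Gb))).

From mathcomp Require Import all_boot.
From mathcomp Require Import finmap multiset.

(* The structural rules on the banged
   context and the exchange rule keep the program unchanged, rule M adds the
   context V to every OUT value, rule (+)-H puts a divergent vertex above the
   two programs of its premises, and Cut grafts the program of the right
   premise on every terminal vertex of the program of the left premise.  The
   path condition of a strong solution is additive along such grafts. *)

Local Open Scope mset_scope.

Fixpoint graft (P Q : program) : program :=
  match P with
  | PLeaf => Q
  | PNode1 X Y P1 => PNode1 X Y (graft P1 Q)
  | PNode2 X Y1 Y2 P1 P2 => PNode2 X Y1 Y2 (graft P1 Q) (graft P2 Q)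
  end.

Lemma program_wf_graft P Q :
  program_wf P -> program_wf Q -> program_wf (graft P Q).
Proof.
elim: P => [|X Y P1 IH|X Y1 Y2 P1 IH1 P2 IH2] //=.
- by case/and3P=> -> -> wP1 wQ; rewrite IH.
- by case/and5P=> -> -> -> wP1 wP2 wQ; rewrite IH1 // IH2.
Qed.

Lemma outs_ok_graft P Q W U Z :
  outs_ok P W U -> outs_ok Q U Z -> outs_ok (graft P Q) W Z.
Proof.
elim: P W => [|X Y P1 IH|X Y1 Y2 P1 IH1 P2 IH2] W /=.
- by move=> ->.
- by move=> [V [-> oP1]] oQ; exists V; split; last exact: IH oP1 oQ.
- move=> [V [-> [oP1 oP2]]] oQ; exists V.
  by split=> //; split; [exact: IH1 oP1 oQ | exact: IH2 oP2 oQ].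
Qed.

Lemma outs_ok_msetD P W Z V :
  outs_ok P W Z -> outs_ok P (W `+` V) (Z `+` V).
Proof.
elim: P W => [|X Y P1 IH|X Y1 Y2 P1 IH1 P2 IH2] W /=.
- by move=> ->.
- move=> [V' [-> oP1]]; exists (V' `+` V).
  by rewrite !msetDA; split; last exact: IH.
- move=> [V' [-> [oP1 oP2]]]; exists (V' `+` V).
  by rewrite !msetDA; split=> //; split; [exact: IH1 | exact: IH2].
Qed.

Lemma mem_used_paths_graft P Q s : s \in used_paths (graft P Q) ->
  exists s1 s2, [/\ s1 \in used_paths P, s2 \in used_paths Q & s = s1 ++ s2].
Proof.
elim: P s => [|X Y P1 IH|X Y1 Y2 P1 IH1 P2 IH2] s /=.
- by move=> sQ; exists [::], s; rewrite mem_seq1.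
- case/mapP=> s' /IH [s1 [s2 [s1P s2Q ->]]] ->.
  by exists (Horn X Y :: s1), s2; split=> //; apply: map_f.
- rewrite map_cat mem_cat; case/orP=> /mapP [s' s'P ->].
  + have [s1 [s2 [s1P s2Q ->]]] := IH1 _ s'P.
    exists (OHorn X Y1 Y2 :: s1), s2; split=> //.
    by rewrite map_cat mem_cat map_f.
  + have [s1 [s2 [s1P s2Q ->]]] := IH2 _ s'P.
    exists (OHorn X Y1 Y2 :: s1), s2; split=> //.
    by rewrite map_cat mem_cat [_ \in map _ (used_paths P2)]map_f ?orbT.
Qed.

Definition path_ok (s Dl Gb : seq formula) : Prop :=
  (forall A, A \in s -> (A \in Gb) || (A \in Dl)) /\
  (forall A, count_mem A Dl <= count_mem A s /\
             (count_mem A Dl < count_mem A s -> A \in Gb)).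

Definition paths_ok (P : program) (Dl Gb : seq formula) : Prop :=
  forall s, s \in used_paths P -> path_ok s Dl Gb.

Lemma paths_ok_mono P Dl Gb Dl' Gb' :
  (forall s, path_ok s Dl Gb -> path_ok s Dl' Gb') ->
  paths_ok P Dl Gb -> paths_ok P Dl' Gb'.
Proof. by move=> mono okP s /okP /mono. Qed.

Lemma path_ok_nil Gb : path_ok [::] [::] Gb.
Proof. by []. Qed.

Lemma path_ok_cons A s Dl Gb :
  path_ok s Dl Gb -> path_ok (A :: s) (A :: Dl) Gb.
Proof.
move=> [sub cnt]; split=> B /=.
- by rewrite !in_cons orbCA => /orP [->|/sub ->]; rewrite ?orbT.
- by rewrite leq_add2l ltn_add2l; apply: cnt.
Qed.

Lemma path_ok_subset s Dl Gb Gb' :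
  {subset Gb <= Gb'} -> path_ok s Dl Gb -> path_ok s Dl Gb'.
Proof.
move=> sGb [sub cnt]; split=> [B /sub /orP [/sGb|] -> | B]; rewrite ?orbT //.
by have [le lt] := cnt B; split=> // /lt /sGb.
Qed.

Lemma path_ok_bang A s Dl Gb :
  path_ok s (A :: Dl) Gb -> path_ok s Dl (A :: Gb).
Proof.
move=> [sub cnt]; split=> B.
  by move/sub; rewrite !in_cons => /orP [|/orP []] ->; rewrite ?orbT.
have [le lt] := cnt B; move: le lt => /=; rewrite in_cons.
case: (A =P B) => [-> le _ | _ le lt].
  by rewrite eqxx in le *; split=> //; apply: ltnW.
by split=> // /lt ->; rewrite orbT.
Qed.

Lemma path_ok_cat s1 s2 D1 D2 G1 G2 :
  path_ok s1 D1 G1 -> path_ok s2 D2 G2 ->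
  path_ok (s1 ++ s2) (D1 ++ D2) (G1 ++ G2).
Proof.
move=> [sub1 cnt1] [sub2 cnt2]; split=> [A|A].
  by rewrite !mem_cat => /orP [/sub1|/sub2] /orP [] ->; rewrite ?orbT.
rewrite !count_cat mem_cat.
have [le1 lt1] := cnt1 A; have [le2 lt2] := cnt2 A.
split=> [|lt]; first exact: leq_add.
have [/lt1 -> //|ge1] := ltnP (count_mem A D1) (count_mem A s1).
suff /lt2 -> : count_mem A D2 < count_mem A s2 by rewrite orbT.
by rewrite -(ltn_add2l (count_mem A s1)) (leq_ltn_trans _ lt) ?leq_add2r.
Qed.

Lemma path_ok_perm s Dl Gb Dl' Gb' :
  perm_eq Dl Dl' -> perm_eq Gb Gb' -> path_ok s Dl Gb -> path_ok s Dl' Gb'.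
Proof.
move=> pD pG [sub cnt]; split=> A; rewrite -(perm_mem pG).
  by rewrite -(perm_mem pD); apply: sub.
by rewrite -(permP pD); apply: cnt.
Qed.

Lemma paths_ok_divergent X Y1 Y2 P1 P2 Dl Gb :
  paths_ok P1 Dl Gb -> paths_ok P2 Dl Gb ->
  paths_ok (PNode2 X Y1 Y2 P1 P2) (OHorn X Y1 Y2 :: Dl) Gb.
Proof.
move=> ok1 ok2 s; rewrite /= map_cat mem_cat.
by case/orP=> /mapP [s' s'P ->]; apply: path_ok_cons; [apply: ok1 | apply: ok2].
Qed.

Lemma paths_ok_graft P Q D1 D2 G1 G2 :
  paths_ok P D1 G1 -> paths_ok Q D2 G2 ->
  paths_ok (graft P Q) (D1 ++ D2) (G1 ++ G2).
Proof.
move=> okP okQ s /mem_used_paths_graft [s1 [s2 [s1P s2Q ->]]].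
exact: path_ok_cat (okP _ s1P) (okQ _ s2Q).
Qed.

Lemma strong_solution_transfer P W Dl Gb Z W' Dl' Gb' Z' :
  (outs_ok P W Z -> outs_ok P W' Z') ->
  (forall s, path_ok s Dl Gb -> path_ok s Dl' Gb') ->
  program_wf P /\ strong_solution P W Dl Gb Z ->
  exists P, program_wf P /\ strong_solution P W' Dl' Gb' Z'.
Proof.
move=> outs paths [wP [oP okP]]; exists P.
by split=> //; split; [exact: outs | exact: paths_ok_mono okP].
Qed.

Theorem theorem2 (W Z : lprod) (Dl Gb : seq formula) :
  hll W Dl Gb Z ->
  exists P : program, program_wf P /\ strong_solution P W Dl Gb Z.
Proof.
elim=> {W Z Dl Gb}.
- move=> X _; exists PLeaf; split=> //; split=> // s.
  by rewrite mem_seq1 => /eqP ->; apply: path_ok_nil.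
- move=> X Y sX sY; exists (PNode1 X Y PLeaf); split; first by rewrite /= sX sY.
  split; first by exists mset0; rewrite !msetD0.
  by move=> s; rewrite mem_seq1 => /eqP ->; apply/path_ok_cons/path_ok_nil.
- move=> X G D Y V _ [P solP]; apply: strong_solution_transfer solP => //.
  exact: outs_ok_msetD.
- move=> X Y1 Y2 V G D Z sX sY1 sY2 _ [P1 [w1 [o1 ok1]]] _ [P2 [w2 [o2 ok2]]].
  exists (PNode2 X Y1 Y2 P1 P2); rewrite /= sX sY1 sY2 w1 w2.
  by split=> //; split; [exists V | exact: paths_ok_divergent].
- move=> X A G D Z _ [P solP]; apply: strong_solution_transfer solP => // s.
  exact: path_ok_bang.
- move=> X A G D Z _ _ [P solP]; apply: strong_solution_transfer solP => // s.
  by apply: path_ok_subset => B; rewrite in_cons => ->; rewrite orbT.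
- move=> X A G D Z _ [P solP]; apply: strong_solution_transfer solP => // s.
  by apply: path_ok_subset => B; rewrite !in_cons orbA orbb.
- move=> W G1 D1 U G2 D2 Z _ [P1 [w1 [o1 ok1]]] _ [P2 [w2 [o2 ok2]]].
  exists (graft P1 P2); split; first exact: program_wf_graft.
  by split; [exact: outs_ok_graft o1 o2 | exact: paths_ok_graft].
- move=> W G D Z G' D' _ [P solP] pG pD.
  by apply: strong_solution_transfer solP => // s; apply: path_ok_perm.
Qed.
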